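(* Let $X_\Sigma$ be a projective toric variety. For any $x\in Z(\Sigma)$ and any $D\in\mathrm{Amp}(X_\Sigma)_{\mathbf R}$, there is a unique vector $\lambda^D_x\in\Lambda^D_x$ that is $\chi_D$-adapted to $x$, and $M^D(x)=-\|\lambda^D_x\|$.
   Context: $\Sigma$ complete fan, rays $\Sigma(1)$, generators $u_\rho$, divisors $D_\rho$; primitive collections $C\subset\Sigma(1)$ (not contained in $\sigma(1)$ for any cone $\sigma$, every proper subset is); $Z(\Sigma)=\bigcup_CV(x_\rho:\rho\in C)\subset\mathbf C^{\Sigma(1)}$. $G=\mathrm{Hom}(\mathrm{Cl}(X_\Sigma),\mathbf C^\times)$, $\Gamma(G)=\{b\in\mathbf Z^{\Sigma(1)}:\sum b_\rho u_\rho=0\}$, $\langle\chi_D,b\rangle=\sum a_\rho b_\rho$ for $D=\sum a_\rho D_\rho$, extended $\mathbf R$-linearly; $\Gamma(G)_{\mathbf R}\subset\mathbf R^{\Sigma(1)}$ with restricted standard inner product and norm; $\chi_D^*\in\Gamma(G)_{\mathbf R}$ defined by $(\chi_D^*,v)=\langle\chi_D,v\rangle$. $\mathrm{Amp}(X_\Sigma)_{\mathbf R}$ is the ample cone in $\mathrm{Pic}(X_\Sigma)_{\mathbf R}$. For $x\in\mathbf C^{\Sigma(1)}$, $S_x=\{\rho:x_\rho\ne0\}$, $\sigma_x=\{v\in\Gamma(G)_{\mathbf R}:v_\rho\ge0\ \forall\rho\in S_x\}$; for $Z\subset\Sigma(1)$, $W_Z=\{v\in\Gamma(G)_{\mathbf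 R}:v_\rho=0\ \forall\rho\in Z\}$ and $\mathrm{Proj}_{W_Z}$ is orthogonal projection; $\Lambda^D_x=\{-\mathrm{Proj}_{W_Z}\chi_D^*:Z\subset S_x,\ -\mathrm{Proj}_{W_Z}\chi_D^*\in\sigma_x\}$. $M^D(x)=\inf_{\lambda\in\sigma_x\setminus\{0\}}\langle\chi_D,\lambda\rangle/\|\lambda\|$, and $\lambda\in\Gamma(G)_{\mathbf R}$ is $\chi_D$-adapted to $x$ if $\langle\chi_D,\lambda\rangle/\|\lambda\|=M^D(x)$. *)

From HB Require Import structures.
From mathcomp Require Import all_boot all_order all_algebra.
From mathcomp Require Import classical_sets boolp reals constructive_ereal ereal.
From mathcomp Require Import complex.
From Stdlib Require Import ClassicalEpsilon.

Set Implicit Arguments.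
Unset Strict Implicit.
Unset Printing Implicit Defensive.

Import Order.TTheory GRing.Theory Num.Theory.
Local Open Scope ring_scope.
Local Open Scope classical_set_scope.

Section Toric.
Variables (R : realType) (n r : nat).

(* rays are indexed by 'I_r; u i : Z^n is the generator of ray i *)
Definition vecR := 'I_r -> R.
Definition dotR (v w : vecR) : R := \sum_(i < r) v i * w i.
Definition normR (v : vecR) : R := Num.sqrt (dotR v v).

Definition pairN (m v : 'I_n -> R) : R := \sum_(j < n) m j * v j.

Variable u : 'I_r -> 'I_n -> int.
Definition uR (i : 'I_r) : 'I_n -> R := fun j => (u i j)%:~R.

Definition cone_of (tau : {set 'I_r}) : set ('I_n -> R) :=
  [set v | exists c : 'I_r -> R, (forall i, 0 <= c i) /\
      (forall i, i \notin tau -> c i = 0) /\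
      v = (fun j => \sum_(i < r) c i * uR i j)].

Definition is_face (C F : set ('I_n -> R)) : Prop :=
  exists m : 'I_n -> R, (forall v, C v -> 0 <= pairN m v) /\
    F = C `&` [set v | pairN m v = 0].

(* S : the cones of the fan, each given by its set of rays sigma(1) *)
Definition is_complete_fan (S : {set {set 'I_r}}) : Prop :=
  (forall i (d : nat), (forall j, (d %| `|u i j|)%N) -> d = 1%N) /\
  (forall i, [set i]%SET \in S) /\
  (forall tau, tau \in S -> forall i, cone_of tau (uR i) <-> i \in tau) /\
  (forall tau, tau \in S -> forall v,
      cone_of tau v -> cone_of tau (fun j => - v j) -> v = (fun _ => 0)) /\
  (forall tau, tau \in S -> forall F, is_face (cone_of tau) F ->
      exists2 tau', tau' \in S & F = cone_of tau') /\
  (forall tau1 tau2, tau1 \in S -> tau2 \in S ->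
      is_face (cone_of tau1) (cone_of tau1 `&` cone_of tau2) /\
      is_face (cone_of tau2) (cone_of tau1 `&` cone_of tau2)) /\
  (forall v : 'I_n -> R, exists2 tau, tau \in S & cone_of tau v).

Definition maximal_cone (S : {set {set 'I_r}}) (sigma : {set 'I_r}) : Prop :=
  sigma \in S /\ forall tau, tau \in S -> (sigma \subset tau)%SET -> tau = sigma.

(* D = sum_i a_i D_i is an R-Cartier divisor with strictly convex support
   function, i.e. its class lies in Amp(X_Sigma)_R *)
Definition ample (S : {set {set 'I_r}}) (a : vecR) : Prop :=
  forall sigma, maximal_cone S sigma ->
    exists m : 'I_n -> R,
      (forall i, i \in sigma -> pairN m (uR i) = - a i) /\
      (forall i, i \notin sigma -> pairN m (uR i) > - a i).

Definition projective (S : {set {set 'I_r}}) : Prop := exists a, ample S a.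

Definition primitive_collection (S : {set {set 'I_r}}) (C : {set 'I_r}) : Prop :=
  (forall tau, tau \in S -> ~~ (C \subset tau)%SET) /\
  (forall C' : {set 'I_r}, (C' \proper C)%SET -> exists2 tau, tau \in S & (C' \subset tau)%SET).

Definition Zfan (S : {set {set 'I_r}}) : set ('I_r -> R[i]) :=
  [set x | exists C, primitive_collection S C /\ forall i, i \in C -> x i = 0].

Definition GammaR : set vecR :=
  [set v | forall j, \sum_(i < r) v i * uR i j = 0].

Definition pairD (a v : vecR) : R := dotR a v.

Definition vzero : vecR := fun _ => 0.

(* chi_D^* : the element of Gamma(G)_R representing <chi_D, .> *)
Definition chistar (a : vecR) : vecR :=
  epsilon (inhabits vzero)
    (fun w => GammaR w /\ forall v, GammaR v -> dotR w v = pairD a v).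

Definition S_x (x : 'I_r -> R[i]) : {set 'I_r} := [set i | x i != 0].

Definition sigma_x (x : 'I_r -> R[i]) : set vecR :=
  [set v | GammaR v /\ forall i, i \in S_x x -> 0 <= v i].

Definition W_ (Z : {set 'I_r}) : set vecR :=
  [set v | GammaR v /\ forall i, i \in Z -> v i = 0].

Definition proj (W : set vecR) (v : vecR) : vecR :=
  epsilon (inhabits vzero)
    (fun p => W p /\ forall y, W y -> dotR (fun i => v i - p i) y = 0).

Definition Lambda (a : vecR) (x : 'I_r -> R[i]) : set vecR :=
  [set lam | exists Z : {set 'I_r}, (Z \subset S_x x)%SET /\
     lam = (fun i => - proj (W_ Z) (chistar a) i) /\ sigma_x x lam].

Definition MD (a : vecR) (x : 'I_r -> R[i]) : \bar R :=
  ereal_inf [set ((pairD a lam / normR lam)%:E) | lam in sigma_x x `\ vzero].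

Definition adapted (a : vecR) (x : 'I_r -> R[i]) (lam : vecR) : Prop :=
  ((pairD a lam / normR lam)%:E = MD a x)%E.

End Toric.

From HB Require Import structures.
From mathcomp Require Import all_boot all_order all_algebra.
From mathcomp Require Import classical_sets boolp functions reals constructive_ereal ereal.
From mathcomp Require Import complex ring lra.
From Stdlib Require Import ClassicalEpsilon.
Import Order.TTheory GRing.Theory Num.Theory.
Local Open Scope ring_scope.
Local Open Scope classical_set_scope.

Set Implicit Arguments.
Unset Strict Implicit.
Unset Printing Implicit Defensive.

(** Put [c = - chi_D^*], so that [<chi_D, lam> = - (c, lam)] on [Gamma(G)_R]. The
    point [q] of the polyhedral cone [sigma_x] nearest to [c] is the orthogonal
    projection of [c] onto [W_Z], where [Z] is the set of constraints [v_rho >= 0]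
    active at [q]; hence [q] lies in [Lambda^D_x] and [(c, q) = |q|^2]. Comparing
    [|q - c|^2] with [|t lam - c|^2] for [t >= 0] (a discriminant argument) gives
    [(c, lam) <= |q| |lam|] on [sigma_x], so [M^D(x) = - |q|], attained at [q], as
    soon as [q <> 0]. That [q <> 0] is instability: the zero set [T] of [x] contains a
    primitive collection, and writing [sum_(rho in T) u_rho = sum_rho k_rho u_rho]
    inside a cone of the fan, [k - 1_T] lies in [sigma_x] and pairs negatively with
    the ample [D]. Finally an adapted [mu] in [Lambda^D_x] has
    [(c, mu) = |mu|^2 = |q|^2], so it is another nearest point, and strict
    convexity of the squared distance forces [mu = q]. *)

Lemma le_sqrtM_of_quadratic_ge0 (R : rcfType) (m a b : R) : 0 < b ->
  (forall t, 0 <= t -> 0 <= t ^+ 2 * b - 2 * t * a + m) ->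
  a <= Num.sqrt m * Num.sqrt b.
Proof.
move=> b0 quad_ge0; have [a0|a0] := lerP a 0.
  by apply: le_trans a0 _; rewrite mulr_ge0 ?sqrtr_ge0.
have m0 : 0 <= m by have := quad_ge0 0 (lexx 0); rewrite expr2 !(mul0r, mulr0) subr0 add0r.
have := quad_ge0 (a / b) (divr_ge0 (ltW a0) (ltW b0)).
have -> : (a / b) ^+ 2 * b - 2 * (a / b) * a = - (a ^+ 2 / b) by field; exact: lt0r_neq0.
rewrite addrC subr_ge0 ler_pdivrMr // => a2_le.
by rewrite -sqrtrM // -(ger0_norm (ltW a0)) -sqrtr_sqr ler_wsqrtr.
Qed.

Lemma ereal_inf_attained (R : realType) (T : Type) (A : set T) (f : T -> R) z :
  A z -> (forall y, A y -> f z <= f y) ->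
  ereal_inf [set (f y)%:E | y in A] = (f z)%:E.
Proof.
move=> Az z_min; apply/le_anti/andP; split; first by apply: ereal_inf_lbound; exists z.
by apply: le_ereal_inf_tmp => _ [y Ay <-]; rewrite lee_fin z_min.
Qed.

Section InnerProduct.
Variables (R : realType) (r : nat).
(* [R^o] lets [functions] equip [V] with its pointwise [lmodType R] structure;
   [V] is convertible to [vecR R r]. *)
Local Notation V := ('I_r -> R^o).
Implicit Types (c e p q v w y : V) (k t : R).

Lemma dotRC v w : dotR v w = dotR w v.
Proof. by apply: eq_bigr => i _; rewrite mulrC. Qed.

Lemma dotRDr e v w : dotR e (v + w) = dotR e v + dotR e w.
Proof. by rewrite /dotR -big_split; apply: eq_bigr => i _; exact: mulrDr. Qed.

Lemma dotRZr e k v : dotR e (k *: v) = k * dotR e v.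
Proof. by rewrite /dotR mulr_sumr; apply: eq_bigr => i _; exact: mulrCA. Qed.

Lemma dotRNr e v : dotR e (- v) = - dotR e v.
Proof. by rewrite -scaleN1r dotRZr mulN1r. Qed.

Lemma dotRBr e v w : dotR e (v - w) = dotR e v - dotR e w.
Proof. by rewrite dotRDr dotRNr. Qed.

Lemma dotR0r e : dotR e 0 = 0.
Proof. by rewrite -(subrr e) dotRBr subrr. Qed.

Lemma dotRDl e v w : dotR (v + w) e = dotR v e + dotR w e.
Proof. by rewrite dotRC dotRDr !(dotRC e). Qed.

Lemma dotRZl e k v : dotR (k *: v) e = k * dotR v e.
Proof. by rewrite dotRC dotRZr dotRC. Qed.

Lemma dotRNl e v : dotR (- v) e = - dotR v e.
Proof. by rewrite dotRC dotRNr dotRC. Qed.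

Lemma dotRBl e v w : dotR (v - w) e = dotR v e - dotR w e.
Proof. by rewrite dotRC dotRBr !(dotRC e). Qed.

Lemma dotRR_ge0 v : 0 <= dotR v v.
Proof. by apply: sumr_ge0 => i _; rewrite -expr2 sqr_ge0. Qed.

Lemma dotRR_eq0 v : dotR v v = 0 -> v = 0.
Proof.
move=> /eqP; rewrite psumr_eq0 => [/allP v0|i _]; last by rewrite -expr2 sqr_ge0.
apply/funext => i; have /implyP := v0 i (mem_index_enum i).
by rewrite mulf_eq0 orbb => /(_ isT)/eqP.
Qed.

Lemma normR_sqr v : normR v ^+ 2 = dotR v v.
Proof. exact/sqr_sqrtr/dotRR_ge0. Qed.

Lemma normR0 : normR (0 : V) = 0.
Proof. by rewrite /normR dotR0r sqrtr0. Qed.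

Lemma normR_ge0 v : 0 <= normR v.
Proof. exact: sqrtr_ge0. Qed.

Lemma normR_gt0 v : v <> 0 -> 0 < normR v.
Proof.
move=> v0; rewrite sqrtr_gt0 lt_def dotRR_ge0 andbT.
by apply/eqP => /dotRR_eq0.
Qed.

Definition sqdist v w := dotR (v - w) (v - w).

Lemma sqdistE v w : sqdist v w = dotR v v - 2 * dotR v w + dotR w w.
Proof. by rewrite /sqdist dotRBl !dotRBr (dotRC w v); ring. Qed.

Lemma sqdist_ge0 v w : 0 <= sqdist v w.
Proof. exact: dotRR_ge0. Qed.

Lemma sqdist_eq0 v w : sqdist v w = 0 -> v = w.
Proof. by move/dotRR_eq0/eqP; rewrite subr_eq0 => /eqP. Qed.

Lemma sqdist_combination t v w c :
  sqdist (t *: v + (1 - t) *: w) c =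
  t * sqdist v c + (1 - t) * sqdist w c - t * (1 - t) * sqdist v w.
Proof.
rewrite !sqdistE !dotRDl !dotRDr !dotRZl !dotRZr (dotRC w v); ring.
Qed.

Definition subspace (W : set V) := W 0 /\ forall k v w, W v -> W w -> W (k *: v + w).

Definition conic (K : set V) :=
  forall s t v w, 0 <= s -> 0 <= t -> K v -> K w -> K (s *: v + t *: w).

Lemma subspaceB W v w : subspace W -> W v -> W w -> W (v - w).
Proof. by move=> [_ Wlin] Wv Ww; rewrite addrC -scaleN1r; apply: Wlin. Qed.

Lemma subspaceN W v : subspace W -> W v -> W (- v).
Proof. by move=> Wsub Wv; rewrite -sub0r; apply: subspaceB => //; case: Wsub. Qed.

Lemma subspaceZ W k v : subspace W -> W v -> W (k *: v).
Proof. by move=> [W0 Wlin] Wv; rewrite -[_ *: v]addr0; apply: Wlin. Qed.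

Lemma subspace_conic W : subspace W -> conic W.
Proof.
move=> Wsub s t v w _ _ Wv Ww; case: (Wsub) => _ Wlin.
by apply: Wlin => //; apply: subspaceZ.
Qed.

Lemma subspaceT : subspace setT.
Proof. by []. Qed.

Lemma subspaceI W1 W2 : subspace W1 -> subspace W2 -> subspace (W1 `&` W2).
Proof.
move=> [W10 W1lin] [W20 W2lin]; split=> // k v w [W1v W2v] [W1w W2w].
by split; [apply: W1lin | apply: W2lin].
Qed.

Lemma conicI K1 K2 : conic K1 -> conic K2 -> conic (K1 `&` K2).
Proof.
move=> K1c K2c s t v w s0 t0 [K1v K2v] [K1w K2w].
by split; [apply: K1c | apply: K2c].
Qed.

Lemma sqdist_min_uniq K c q1 q2 : conic K -> K q1 -> K q2 ->
  (forall v, K v -> sqdist q1 c <= sqdist v c) -> sqdist q2 c = sqdist q1 c ->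
  q2 = q1.
Proof.
move=> Kconic Kq1 Kq2 q1_min q2_eq.
have Kmid : K (2^-1 *: q2 + (1 - 2^-1) *: q1).
  by apply: Kconic => //; rewrite ?subr_ge0 ?invf_le1 ?invr_ge0 ?ler1n.
have := q1_min _ Kmid; rewrite sqdist_combination q2_eq => mid_ge.
apply: sqdist_eq0; apply/eqP; rewrite eq_le sqdist_ge0 andbT.
have := sqdist_ge0 q2 q1; lra.
Qed.

Lemma subspace_hyperplane e : subspace [set v | dotR e v = 0].
Proof.
split=> [|k v w /= ev ew]; first exact: dotR0r.
by rewrite dotRDr dotRZr ev ew mulr0 addr0.
Qed.

Definition is_proj (W : set V) c p := W p /\ forall y, W y -> dotR (c - p) y = 0.

Definition has_proj (W : set V) := forall c, exists p, is_proj W c p.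

Lemma proj_spec W c : has_proj W -> is_proj W c (proj W c).
Proof. by move=> Wproj; apply: epsilon_spec; apply: Wproj. Qed.

Lemma is_proj_dot W c p : is_proj W c p -> dotR c p = dotR p p.
Proof. by move=> [Wp cp_orth]; apply/eqP; rewrite -subr_eq0 -dotRBl cp_orth. Qed.

Lemma is_projN W c p : subspace W -> is_proj W c p -> is_proj W (- c) (- p).
Proof.
move=> Wsub [Wp cp_orth]; split=> [|y Wy]; first exact: subspaceN.
by rewrite -opprD dotRNl cp_orth ?oppr0.
Qed.

Lemma is_proj_uniq W c p1 p2 :
  subspace W -> is_proj W c p1 -> is_proj W c p2 -> p1 = p2.
Proof.
move=> Wsub [Wp1 orth1] [Wp2 orth2]; apply: sqdist_eq0.
have W12 : W (p1 - p2) by apply: subspaceB.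
have -> : sqdist p1 p2 = dotR ((c - p2) - (c - p1)) (p1 - p2).
  by rewrite [in RHS]addrC opprB addrA subrK.
by rewrite dotRBl orth1 // orth2 // subrr.
Qed.

Lemma sqdist_proj W c p v :
  subspace W -> is_proj W c p -> W v -> sqdist v c = sqdist p c + sqdist v p.
Proof.
move=> Wsub [Wp cp_orth] Wv.
have vp_orth : dotR (c - p) (v - p) = 0 by apply: cp_orth; apply: subspaceB.
rewrite /sqdist (_ : v - c = (v - p) - (c - p)); last by rewrite opprB addrA subrK.
rewrite (_ : p - c = - (c - p)); last by rewrite opprB.
rewrite dotRNl dotRNr opprK dotRBl (dotRBr (v - p)) (dotRBr (c - p)).
rewrite (dotRC (v - p) (c - p)) vp_orth; ring.
Qed.

Lemma has_projT : has_proj setT.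
Proof. by move=> c; exists c; split=> // y _; rewrite subrr dotRC dotR0r. Qed.

Lemma has_proj_hyperplane H e :
  subspace H -> has_proj H -> has_proj (H `&` [set v | dotR e v = 0]).
Proof.
move=> Hsub Hproj c; have [pc [Hpc pc_orth]] := Hproj c.
have [h [Hh h_orth]] := Hproj e.
have e_on_H v : H v -> dotR e v = dotR h v.
  by move=> Hv; apply/eqP; rewrite -subr_eq0 -dotRBl h_orth.
(* [e] and its projection [h] agree on [H], so removing from [pc] its component
   along [h] projects onto [H `&` e^perp]. *)
have [h0|hh0] := eqVneq (dotR h h) 0.
  exists pc; split=> [|y [Hy _]]; last exact: pc_orth.
  by split=> //=; rewrite e_on_H // (dotRR_eq0 h0) dotRC dotR0r.
pose k := dotR h pc / dotR h h.
exists (pc - k *: h); split=> [|y [Hy ey]].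
  have Hp : H (pc - k *: h) by apply: subspaceB => //; apply: subspaceZ.
  by split=> //=; rewrite e_on_H // dotRBr dotRZr /k divfK // subrr.
by rewrite opprB addrCA dotRDl dotRZl pc_orth // -e_on_H // ey mulr0 addr0.
Qed.

Lemma sqdist_convex t v w c : 0 <= t <= 1 ->
  sqdist (t *: v + (1 - t) *: w) c <= t * sqdist v c + (1 - t) * sqdist w c.
Proof.
move=> /andP[t0 t1]; rewrite sqdist_combination gerDl oppr_le0.
by rewrite !mulr_ge0 ?sqdist_ge0 ?subr_ge0.
Qed.

Lemma hyperplane_crossing e v w : dotR e w < 0 -> 0 <= dotR e v ->
  exists2 t, 0 <= t <= 1 & dotR e (t *: v + (1 - t) *: w) = 0.
Proof.
move=> ew ev; have d0 : dotR e w - dotR e v < 0 by rewrite subr_lt0 (lt_le_trans ew).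
exists (dotR e w / (dotR e w - dotR e v)).
  by rewrite ler_ndivlMr // ler_ndivrMr // mul0r mul1r ltW //= lerBlDr lerDl.
rewrite dotRDr !dotRZr; field; exact: ltr0_neq0.
Qed.

Section Constraints.
Variables (I : eqType) (g : I -> V).

Definition orth (Z : seq I) : set V := [set v | forall i, i \in Z -> dotR (g i) v = 0].

Definition dual_cone (s : seq I) : set V :=
  [set v | forall i, i \in s -> 0 <= dotR (g i) v].

Lemma orth_nil : orth [::] = setT.
Proof. by apply/seteqP; split=> v. Qed.

Lemma orth_cons i Z : orth (i :: Z) = [set v | dotR (g i) v = 0] `&` orth Z.
Proof.
apply/seteqP; split=> v /=.
  by move=> vZ; split=> [|j jZ]; apply: vZ; rewrite inE ?eqxx ?jZ ?orbT.
by move=> [vi vZ] j; rewrite inE => /predU1P[->|/vZ].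
Qed.

Lemma dual_cone_cons i s :
  dual_cone (i :: s) = [set v | 0 <= dotR (g i) v] `&` dual_cone s.
Proof.
apply/seteqP; split=> v /=.
  by move=> vs; split=> [|j js]; apply: vs; rewrite inE ?eqxx ?js ?orbT.
by move=> [vi vs] j; rewrite inE => /predU1P[->|/vs].
Qed.

Lemma subspace_orth Z : subspace (orth Z).
Proof.
split=> [i _|k v w vZ wZ i iZ]; first exact: dotR0r.
by rewrite dotRDr dotRZr vZ // wZ // mulr0 addr0.
Qed.

Lemma dual_cone_conic s : conic (dual_cone s).
Proof.
move=> a b v w a0 b0 vs ws i si; rewrite dotRDr !dotRZr.
by apply: addr_ge0; apply: mulr_ge0 => //; [apply: vs | apply: ws].
Qed.

Lemma has_proj_orth H Z : subspace H -> has_proj H -> has_proj (H `&` orth Z).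
Proof.
elim: Z H => [|i Z IHZ] H Hsub Hproj; first by rewrite orth_nil setIT.
rewrite orth_cons setIA; apply: IHZ; last exact: has_proj_hyperplane.
exact/subspaceI/subspace_hyperplane.
Qed.

Lemma nearest_in_polyhedral_cone c s H : subspace H -> has_proj H ->
  exists q, exists2 Z, {subset Z <= s} &
    [/\ is_proj (H `&` orth Z) c q, dual_cone s q &
        forall v, H v -> dual_cone s v -> sqdist q c <= sqdist v c].
Proof.
elim: s H => [|i s IHs] H Hsub Hproj.
  have [q pq] := Hproj c; exists q, [::] => //; rewrite orth_nil setIT.
  by split=> // v Hv _; rewrite (sqdist_proj Hsub pq Hv) lerDl sqdist_ge0.
have [q [Z Zs [pq sq q_min]]] := IHs H Hsub Hproj.
have [giq|giq] := leP 0 (dotR (g i) q).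
  exists q, Z => [j /Zs js|]; first by rewrite inE js orbT.
  split=> //; first by rewrite dual_cone_cons.
  by move=> v Hv; rewrite dual_cone_cons => -[_ /(q_min _ Hv)].
(* [q] violates [g i]: the nearest point now lies on the hyperplane [g i = 0],
   since the segment from [q] to any competitor crosses it and [sqdist] is
   convex along segments. *)
pose H' := H `&` [set v | dotR (g i) v = 0].
have H'sub : subspace H' by apply/subspaceI/subspace_hyperplane.
have [q' [Z' Z's [pq' sq' q'_min]]] :=
  IHs H' H'sub (has_proj_hyperplane _ Hsub Hproj).
exists q', (i :: Z') => [j|].
  by rewrite !inE => /predU1P[->|/Z's ->]; rewrite ?eqxx ?orbT.
have [[[_ giq'] _] _] := pq'.
split; first by rewrite orth_cons setIA.
  by rewrite dual_cone_cons; split=> //=; rewrite giq'.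
move=> v Hv; rewrite dual_cone_cons => -[giv sv].
have [t t01 giw] := hyperplane_crossing giq giv.
have /andP[t0 t1] := t01.
have [[Hq _] _] := pq.
have H'w : H' (t *: v + (1 - t) *: q).
  by split=> //; apply: subspace_conic; rewrite ?subr_ge0.
have sw : dual_cone s (t *: v + (1 - t) *: q) by apply: dual_cone_conic; rewrite ?subr_ge0.
apply: le_trans (q'_min _ H'w sw) _; apply: le_trans (sqdist_convex _ _ _ t01) _.
have := q_min _ Hv sv; nra.
Qed.

End Constraints.

Section NearestPointOfCone.
Variables (K : set V) (c q : V).
Hypotheses (Kconic : conic K) (Kq : K q) (q_orth : dotR c q = dotR q q).
Hypothesis q_min : forall v, K v -> sqdist q c <= sqdist v c.

Lemma nearest_cone_dot_le v : K v -> dotR c v <= normR q * normR v.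
Proof.
move=> Kv; have [v0|v0] := eqVneq (dotR v v) 0.
  by rewrite (dotRR_eq0 v0) dotR0r mulr_ge0 ?normR_ge0.
apply: le_sqrtM_of_quadratic_ge0; first by rewrite lt_def v0 dotRR_ge0.
move=> t t0; have Ktv : K (t *: v) by rewrite -[_ *: v]addr0 -(scale0r v); apply: Kconic.
have := q_min Ktv; rewrite !sqdistE (dotRC q c) q_orth !dotRZl !dotRZr (dotRC v c); nra.
Qed.

Lemma nearest_cone_uniq mu :
  K mu -> dotR c mu = dotR mu mu -> normR mu = normR q -> mu = q.
Proof.
move=> Kmu mu_orth mu_norm; apply: (sqdist_min_uniq (c := c) Kconic) => //.
by rewrite !sqdistE (dotRC mu c) (dotRC q c) mu_orth q_orth -!normR_sqr mu_norm.
Qed.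

End NearestPointOfCone.

End InnerProduct.

Section Toric.
Variables (R : realType) (n r : nat) (u : 'I_r -> 'I_n -> int).
Local Notation V := ('I_r -> R^o).
Local Notation Gamma := (@GammaR R n r u).
Implicit Types (a v : V) (x : 'I_r -> R[i]).

Definition unit_vec (i : 'I_r) : V := fun k => (i == k)%:R.

Lemma dotR_unit_vec i v : dotR (unit_vec i) v = v i.
Proof.
rewrite /dotR (bigD1 i) //= /unit_vec eqxx mul1r big1 ?addr0 // => k ki.
by rewrite eq_sym (negbTE ki) mul0r.
Qed.

Definition ray_coord (j : 'I_n) : V := fun i => uR R u i j.

Lemma GammaR_orth : Gamma = setT `&` orth ray_coord (enum 'I_n).
Proof.
rewrite setTI; apply/seteqP; split=> v /= vG j.
  by move=> _; rewrite -(vG j); apply: eq_bigr => i _; rewrite mulrC.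
by rewrite -[RHS](vG j (mem_enum _ j)); apply: eq_bigr => i _; rewrite mulrC.
Qed.

Lemma subspace_GammaR : subspace Gamma.
Proof. by rewrite GammaR_orth setTI; apply: subspace_orth. Qed.

Lemma has_proj_GammaR : has_proj Gamma.
Proof. by rewrite GammaR_orth; apply/has_proj_orth/has_projT/subspaceT. Qed.

Lemma W_orth (Z : {set 'I_r}) (Zs : seq 'I_r) :
  Zs =i Z -> W_ (R := R) u Z = Gamma `&` orth unit_vec Zs.
Proof.
move=> eqZ; apply/seteqP; split=> v [vG vZ]; split=> // i iZ.
  by rewrite dotR_unit_vec vZ // -eqZ.
by rewrite -dotR_unit_vec vZ // eqZ.
Qed.

Lemma subspace_W (Z : {set 'I_r}) : subspace (W_ (R := R) u Z).
Proof.
rewrite (W_orth (mem_enum _)).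
exact: subspaceI subspace_GammaR (subspace_orth _ _).
Qed.

Lemma has_proj_W (Z : {set 'I_r}) : has_proj (W_ (R := R) u Z).
Proof.
rewrite (W_orth (mem_enum _)).
exact/has_proj_orth/has_proj_GammaR/subspace_GammaR.
Qed.

Lemma sigma_x_dual x : sigma_x u x = Gamma `&` dual_cone unit_vec (enum (S_x x)).
Proof.
apply/seteqP; split=> v [vG vS]; split=> // i.
  by rewrite mem_enum dotR_unit_vec; apply: vS.
by move=> iS; rewrite -dotR_unit_vec vS ?mem_enum.
Qed.

Lemma conic_sigma_x x : conic (sigma_x u x).
Proof.
rewrite sigma_x_dual; apply: conicI; last exact: dual_cone_conic.
exact: subspace_conic subspace_GammaR.
Qed.

Lemma exists_maximal_cone (S : {set {set 'I_r}}) tau : tau \in S ->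
  exists2 sigma, maximal_cone S sigma & (tau \subset sigma)%SET.
Proof.
move=> tauS; pose P := [pred s : {set 'I_r} | (s \in S) && (tau \subset s)%SET].
have Ptau : P tau by rewrite /= tauS subxx.
have [s /andP[sS tau_s] s_max] := arg_maxnP (fun s : {set 'I_r} => #|s|) Ptau.
exists s => //; split=> // t tS st; apply/eqP; rewrite eq_sym eqEcard st /=.
by apply: s_max; rewrite /= tS (fintype.subset_trans tau_s st).
Qed.

Lemma pairD_linear_equiv (m : 'I_n -> R) a lam : Gamma lam ->
  pairD a lam = \sum_i (a i + pairN m (uR R u i)) * lam i.
Proof.
move=> lamG; have m_lam : \sum_i pairN m (uR R u i) * lam i = 0.
  rewrite /pairN; under eq_bigr do rewrite mulr_suml.
  rewrite exchange_big /=; apply: big1 => j _.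
  rewrite -[RHS](mulr0 (m j)) -[in RHS](lamG j) mulr_sumr; apply: eq_bigr => i _.
  by rewrite -mulrA [_ * lam i]mulrC.
by under eq_bigr do rewrite mulrDl; rewrite big_split /= m_lam addr0.
Qed.

Lemma Zfan_destabilizing (S : {set {set 'I_r}}) x a :
  is_complete_fan R u S -> Zfan S x -> ample u S a ->
  exists2 l, sigma_x u x l & pairD a l < 0.
Proof.
move=> [_ [_ [_ [_ [_ [_ complete]]]]]] [C [[C_notin_cones _] C0]] a_ample.
pose T := [set i | x i == 0]%SET.
have [tau tauS [k [k_ge0 [k_out k_decomp]]]] :=
  complete (fun j => \sum_(i in T) uR R u i j).
have [sigma sigma_max tau_sigma] := exists_maximal_cone tauS.
have [m [m_in m_out]] := a_ample sigma sigma_max.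
pose slack i := a i + pairN m (uR R u i).
have slack_in i : i \in sigma -> slack i = 0.
  by move=> /m_in; rewrite /slack => ->; rewrite subrr.
have slack_out i : i \notin sigma -> 0 < slack i.
  by move=> /m_out; rewrite /slack -subr_gt0 opprK addrC.
have indicator (F : 'I_r -> R) : \sum_i (i \in T)%:R * F i = \sum_(i in T) F i.
  rewrite [RHS]big_mkcond; apply: eq_bigr => i _.
  by case: (i \in T); rewrite ?mul1r ?mul0r.
pose l : 'I_r -> R^o := fun i => k i - (i \in T)%:R.
have lG : Gamma l.
  move=> j; under eq_bigr do rewrite mulrBl; rewrite sumrB indicator.
  by rewrite -(congr1 (fun f => f j) k_decomp) subrr.
exists l.
  split=> // i; rewrite inE => xi0.
  by rewrite /l inE (negbTE xi0) subr0.
have slack_k : \sum_i slack i * k i = 0.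
  apply: big1 => i _; have [/slack_in ->|i_sigma] := boolP (i \in sigma); first exact: mul0r.
  by rewrite k_out ?mulr0 //; apply: contra i_sigma; apply: (fintype.subsetP tau_sigma).
have -> : pairD a l = \sum_i slack i * k i - \sum_(i in T) slack i.
  rewrite (pairD_linear_equiv m) // -indicator -sumrB.
  by apply: eq_bigr => i _; rewrite /l /slack; ring.
have [i0 i0C i0_sigma] := subsetPn (C_notin_cones sigma (proj1 sigma_max)).
rewrite slack_k sub0r oppr_lt0 (bigD1 i0) /=; last by rewrite inE C0.
apply: ltr_pwDl; first exact: slack_out.
apply: sumr_ge0 => i _; have [/slack_in ->|/slack_out/ltW] // := boolP (i \in sigma).
Qed.

Lemma chistar_spec a :
  Gamma (chistar u a) /\ forall v, Gamma v -> dotR (chistar u a) v = pairD a v.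
Proof.
pose P w := Gamma w /\ forall v, Gamma v -> dotR w v = pairD a v.
have [p [pG ap_orth]] := has_proj_GammaR a.
apply: (epsilon_spec _ P); exists p; split=> // v vG.
by apply/eqP; rewrite eq_sym -subr_eq0 -dotRBl ap_orth.
Qed.

Section AdaptedVector.
Variables (a : V) (x : 'I_r -> R[i]).
Local Notation c := (- chistar u a).
Local Notation K := (sigma_x u x).

Lemma pairD_chistar v : Gamma v -> pairD a v = - dotR c v.
Proof. by move=> vG; rewrite dotRNl opprK (proj2 (chistar_spec a)). Qed.

Lemma Lambda_spec mu : Lambda u a x mu -> K mu /\ dotR c mu = dotR mu mu.
Proof.
move=> [Z [_ [-> mu_sigma]]]; split=> //.
apply: (@is_proj_dot _ _ (W_ (R := R) u Z)); apply: is_projN; first exact: subspace_W.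
exact/proj_spec/has_proj_W.
Qed.

Lemma pairD_ratio mu : Lambda u a x mu -> pairD a mu / normR mu = - normR mu.
Proof.
move=> /Lambda_spec[[muG _] mu_orth]; rewrite pairD_chistar // mu_orth -normR_sqr.
have [->|mu0] := eqVneq (normR mu) 0; first by rewrite invr0 mulr0 oppr0.
by rewrite expr2 mulNr mulfK.
Qed.

Lemma exists_nearest_Lambda :
  exists2 q, Lambda u a x q & forall v, K v -> sqdist q c <= sqdist v c.
Proof.
have [q [Zs Zs_sub [q_proj q_dual q_min]]] :=
  nearest_in_polyhedral_cone unit_vec c (enum (S_x x)) subspace_GammaR has_proj_GammaR.
have [[qG _] _] := q_proj.
exists q; last by move=> v; rewrite sigma_x_dual => -[]; apply: q_min.
exists [set i in Zs]%SET; split.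
  by apply/fintype.subsetP => i; rewrite inE => /Zs_sub; rewrite mem_enum.
split; last by rewrite sigma_x_dual.
apply: (is_proj_uniq (subspace_W _)); last exact/is_projN/proj_spec/has_proj_W/subspace_W.
by rewrite (@W_orth _ Zs) // => i; rewrite inE.
Qed.

Section Nearest.
Variable q : V.
Hypotheses (q_Lambda : Lambda u a x q) (q_min : forall v, K v -> sqdist q c <= sqdist v c).

Lemma nearest_pairD_ge v : K v -> - (normR q * normR v) <= pairD a v.
Proof.
have [_ q_orth] := Lambda_spec q_Lambda.
move=> Kv; rewrite pairD_chistar ?lerN2; last by case: Kv.
exact: (nearest_cone_dot_le (@conic_sigma_x x) q_orth q_min Kv).
Qed.

Lemma nearest_normR_gt0 (S : {set {set 'I_r}}) :
  is_complete_fan R u S -> Zfan S x -> ample u S a -> 0 < normR q.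
Proof.
move=> fan Zx a_ample; have [l Kl l_neg] := Zfan_destabilizing fan Zx a_ample.
rewrite lt0r normR_ge0 andbT; apply: contraTneq l_neg => q0.
by rewrite -leNgt (le_trans _ (nearest_pairD_ge Kl)) // q0 mul0r oppr0.
Qed.

Lemma MD_nearest : 0 < normR q -> MD u a x = (- normR q)%:E.
Proof.
move=> q_gt0; rewrite -(pairD_ratio q_Lambda).
apply: ereal_inf_attained => [|v [Kv v0]].
  split; first by case: (Lambda_spec q_Lambda).
  by move=> q0; move: q_gt0; have -> : q = 0 := q0; rewrite normR0 ltxx.
rewrite (pairD_ratio q_Lambda) ler_pdivlMr ?normR_gt0 // mulNr.
exact: nearest_pairD_ge.
Qed.

Lemma nearest_adapted_uniq mu : 0 < normR q ->
  Lambda u a x mu -> adapted u a x mu -> mu = q.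
Proof.
move=> q_gt0 mu_Lambda; rewrite /adapted MD_nearest // pairD_ratio // => -[] /oppr_inj.
have [Kq q_orth] := Lambda_spec q_Lambda; have [Kmu mu_orth] := Lambda_spec mu_Lambda.
exact: (nearest_cone_uniq (@conic_sigma_x x) Kq q_orth q_min Kmu mu_orth).
Qed.

End Nearest.

End AdaptedVector.

End Toric.

Unset Implicit Arguments.
Set Strict Implicit.

Theorem theorem5p5 (R : realType) (n r : nat) (u : 'I_r -> 'I_n -> int)
  (S : {set {set 'I_r}}) (hfan : is_complete_fan R u S) (hproj : projective R u S)
  (x : 'I_r -> R[i]) (hx : Zfan S x) (a : 'I_r -> R) (ha : ample u S a) :
  exists lam : 'I_r -> R,
    (Lambda u a x lam /\ adapted u a x lam) /\
    (forall mu, Lambda u a x mu -> adapted u a x mu -> mu = lam) /\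
    MD u a x = (- normR lam)%:E.
Proof.
(* [hproj] is redundant: [ha] already exhibits an ample divisor. *)
have [q q_Lambda q_min] := exists_nearest_Lambda u a x.
have q_gt0 := nearest_normR_gt0 q_Lambda q_min hfan hx ha.
have MD_q := MD_nearest q_Lambda q_min q_gt0.
exists q; split; [split|split] => //.
- by rewrite /adapted MD_q (pairD_ratio q_Lambda).
- by move=> mu; apply: nearest_adapted_uniq.
Qed.
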